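(* Let $p\ge q$ and $n\ge 1$ be positive integers and let $B$ be a $p\times q$ matrix. Let $C$ be the $(nq+p)\times(nq+p)$ block matrix $$C=\begin{bmatrix} 0 & B & B & \cdots & B\\ B^T & 0 & I & \cdots & I\\ B^T & I & 0 & \cdots & I\\ \vdots & \vdots & \vdots & \ddots & \vdots\\ B^T & I & I & \cdots & 0\end{bmatrix}$$ (one block of size $p$ followed by $n$ blocks of size $q$; the $q$-blocks are $0$ on the block diagonal and $I_q$ off it), and let $D$ be the $(np+q)\times(np+q)$ block matrix $$D=\begin{bmatrix} 0 & B^T & B^T & \cdots & B^T\\ B & 0 & I & \cdots & I\\ B & I & 0 & \cdots & I\\ \vdots & \vdots & \vdots & \ddots & \vdots\\ B & I & I & \cdots & 0\end{bmatrix}$$ (one block of size $q$ followed by $n$ blocks of size $p$; the $p$-blocks are $0$ on the block diagonal and $I_p$ off it). Then $C$ has $-1$ as an eigenvalue with multiplicity at least $(n-1)q$, and $D$ has $-1$ as an eigenvalue with multiplicity at least $(n-1)p$.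
   Context: $I$ denotes an identity matrix and $0$ a zero matrix of appropriate size. *)

From HB Require Import structures.
From mathcomp Require Import all_boot all_order all_algebra.
Set Implicit Arguments. Unset Strict Implicit. Unset Printing Implicit Defensive.
Import Order.TTheory GRing.Theory Num.Theory.
Local Open Scope ring_scope.

Definition star_mx (R : nzRingType) (a b n : nat) (M : 'M[R]_(a, b))
  : 'M[R]_(a + \sum_(j < n) b) :=
  block_mx (0 : 'M[R]_(a, a)) (\mxrow_(j < n) M)
           (\mxcol_(i < n) M^T)
           (\mxblock_(i < n, j < n) (if i == j then (0 : 'M[R]_b) else 1%:M)).

Definition matC (R : nzRingType) (p q n : nat) (B : 'M[R]_(p, q)) := star_mx n B.
Definition matD (R : nzRingType) (p q n : nat) (B : 'M[R]_(p, q)) := star_mx n B^T.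

Definition eig_mult (R : fieldType) (m : nat) (A : 'M[R]_m) (x : R) : nat :=
  mup x (char_poly A).

From HB Require Import structures.
From mathcomp Require Import all_boot all_order all_algebra zify.
Set Implicit Arguments. Unset Strict Implicit. Unset Printing Implicit Defensive.
Import Order.TTheory GRing.Theory Num.Theory.
Local Open Scope ring_scope.

(* The algebraic multiplicity of an eigenvalue x of A is at least its geometric
   multiplicity m - rank (A - x).  Both C and D are instances of the star matrix
   S of M : 'M_(a, b) with n blocks of size b, and S + I factors as
   [I 0; 0 col(I..I)] * [I row(M..M); M^T row(I..I)] through dimension a + b.
   Hence rank (S + I) <= a + b, and -1 has multiplicity at least
   (a + n b) - (a + b) = (n - 1) b. *)

Lemma char_poly_conj (F : fieldType) m (A P : 'M[F]_m) :
  P \in unitmx -> char_poly (P *m A *m invmx P) = char_poly A.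
Proof.
move=> Pu; rewrite /char_poly /char_poly_mx.
set P' := map_mx polyC P; set Q' := map_mx polyC (invmx P).
have PQ : P' *m Q' = 1%:M by rewrite -map_mxM mulmxV // map_scalar_mx /= polyC1.
have -> : 'X%:M - map_mx polyC (P *m A *m invmx P)
    = P' *m ('X%:M - map_mx polyC A) *m Q'.
  rewrite !map_mxM mulmxBr mulmxBl -/P' -/Q'; congr (_ - _).
  by rewrite mul_mx_scalar -scalemxAl PQ scalemx1.
by rewrite !det_mulmx mulrAC -det_mulmx PQ det1 mul1r.
Qed.

Lemma prod_XsubC_geq (R : comNzRingType) m r (x : R) :
  \prod_(j < m) (if (r <= j)%N then 'X - x%:P else 1) = ('X - x%:P) ^+ (m - r).
Proof.
rewrite -big_mkcond -(big_geq_mkord r m xpredT (fun _ => 'X - x%:P)).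
by rewrite prodr_const_nat.
Qed.

Lemma dvdp_char_poly_scalar_cols (R : idomainType) m r (A : 'M[R]_m) x :
  (forall i (j : 'I_m), (r <= j)%N -> A i j = x%:M i j) ->
  ('X - x%:P) ^+ (m - r) %| char_poly A.
Proof.
move=> Ax; pose d := \row_(j < m) (if (r <= j)%N then 'X - x%:P else 1).
pose M := \matrix_(i, j) if (r <= j)%N then (i == j)%:R else char_poly_mx A i j.
have -> : char_poly A = \det M * ('X - x%:P) ^+ (m - r).
  have -> : ('X - x%:P) ^+ (m - r) = \det (diag_mx d).
    by rewrite det_diag -prod_XsubC_geq; apply: eq_bigr => j _; rewrite mxE.
  rewrite /char_poly -det_mulmx; congr (\det _).
  apply/matrixP => i j; rewrite mul_mx_diag !mxE.
  case: ifP => rj; last by rewrite mulr1.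
  by rewrite Ax // mxE; case: (i == j); rewrite ?mul1r ?mul0r ?subr0.
exact: dvdp_mull.
Qed.

(* Conjugating by the row echelon base of A - x makes the last
   m - rank (A - x) columns of A coincide with those of x%:M. *)
Lemma corank_le_mup (F : fieldType) m (A : 'M[F]_m) x :
  (m - \rank (A - x%:M)%R <= mup x (char_poly A))%N.
Proof.
set N := (A - x%:M)%R; set U := row_ebase N.
have Uu : U \in unitmx := row_ebase_unit N.
have UAU : U *m A *m invmx U = U *m col_ebase N *m pid_mx (\rank N) + x%:M.
  have -> : A = N + x%:M by rewrite subrK.
  rewrite mulmxDr mulmxDl -{1}(mulmx_ebase N) !mulmxA mulmxK //.
  by rewrite scalar_mxC mulmxK.
rewrite -(char_poly_conj A Uu) mup_geq ?monic_neq0 ?char_poly_monic //.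
apply: dvdp_char_poly_scalar_cols => i j rj.
rewrite UAU mxE -[RHS]add0r; congr (_ + _).
rewrite mxE big1 // => k _; rewrite [pid_mx _ _ _]mxE.
by case: eqVneq => [->|_]; rewrite ?ltnNge ?rj mulr0.
Qed.

Lemma mxblock_offdiag_add1 (R : pzSemiRingType) n b :
  \mxblock_(i < n, j < n) (if i == j then 0 else 1%:M : 'M[R]_b) + 1%:M =
  \mxblock_(i < n, j < n) (1%:M : 'M[R]_b).
Proof.
rewrite -[X in _ + X](@mxdiagZ _ _ (fun _ : 'I_n => b) 1) /mxdiag -mxblockD.
by apply: eq_mxblock => i j; case: eqP => _; rewrite ?conform_mx_id ?addr0 ?add0r.
Qed.

Lemma mxrank_star_mx_add1 (F : fieldType) a b n (M : 'M[F]_(a, b)) :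
  (\rank (star_mx n M + 1%:M)%R <= a + b)%N.
Proof.
pose X : 'M[F]_(a + \sum_(j < n) b, a + b) :=
  block_mx 1%:M 0 0 (\mxcol_(i < n) (1%:M : 'M[F]_b)).
pose Y : 'M[F]_(a + b, a + \sum_(j < n) b) :=
  block_mx 1%:M (\mxrow_(j < n) M) M^T (\mxrow_(j < n) (1%:M : 'M[F]_b)).
have -> : (star_mx n M + 1%:M)%R = X *m Y.
  rewrite mulmx_block /star_mx scalar_mx_block add_block_mx.
  rewrite !mul0mx !mul1mx !addr0 !add0r mxcol_mul mul_mxcol_mxrow.
  rewrite mxblock_offdiag_add1.
  by under [in RHS]eq_mxcol do rewrite mul1mx; under [in RHS]eq_mxblock do rewrite mul1mx.
exact: leq_trans (mxrankM_maxl _ _) (rank_leq_col _).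
Qed.

Lemma star_mx_mupN1 (F : fieldType) a b n (M : 'M[F]_(a, b)) :
  ((n - 1) * b <= mup (-1) (char_poly (star_mx n M)))%N.
Proof.
apply: leq_trans (corank_le_mup _ (-1)).
rewrite raddfN opprK.
have := mxrank_star_mx_add1 n M; move: (\rank _) => r.
rewrite sum_nat_const card_ord; nia.
Qed.

Theorem lemma3p10 (R : realFieldType) (p q n : nat) (B : 'M[R]_(p, q)) :
  (0 < q)%N -> (q <= p)%N -> (0 < n)%N ->
  ((n - 1) * q <= eig_mult (matC n B) (-1))%N /\
  ((n - 1) * p <= eig_mult (matD n B) (-1))%N.
Proof. by move=> _ _ _; split; apply: star_mx_mupN1. Qed.
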